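(* Let $X$ be a real Banach space, let $V$ be a linear subspace of $X$ and let $x\in S_X$. Then the following are equivalent: (1) For every $v\in V$, $\Vert v+x\Vert=1+\Vert v\Vert$. (2) For every $v^*\in V^*$ there exists $x^*\in X^*$ extending $v^*$ (i.e. $x^*|_V=v^*$) such that $\Vert x^*\Vert=\Vert v^*\Vert$ and $x^*(x)=\Vert v^*\Vert$.
   Context: All Banach spaces are real. $S_X$ denotes the unit sphere of $X$ and $X^*$ its topological dual. *)

From Stdlib Require Export Reals.
Open Scope R_scope.

Record NormedSpace := mkNormedSpace {
  ns_car :> Type;
  ns_zero : ns_car;
  ns_add : ns_car -> ns_car -> ns_car;
  ns_opp : ns_car -> ns_car;
  ns_scal : R -> ns_car -> ns_car;
  ns_norm : ns_car -> R;
  ns_add_assoc : forall x y z, ns_add x (ns_add y z) = ns_add (ns_add x y) z;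
  ns_add_comm : forall x y, ns_add x y = ns_add y x;
  ns_add_zero : forall x, ns_add x ns_zero = x;
  ns_add_opp : forall x, ns_add x (ns_opp x) = ns_zero;
  ns_scal_assoc : forall a b x, ns_scal a (ns_scal b x) = ns_scal (a * b) x;
  ns_scal_one : forall x, ns_scal 1 x = x;
  ns_scal_distr_l : forall a x y, ns_scal a (ns_add x y) = ns_add (ns_scal a x) (ns_scal a y);
  ns_scal_distr_r : forall a b x, ns_scal (a + b) x = ns_add (ns_scal a x) (ns_scal b x);
  ns_norm_eq0 : forall x, ns_norm x = 0 -> x = ns_zero;
  ns_norm_triangle : forall x y, ns_norm (ns_add x y) <= ns_norm x + ns_norm y;
  ns_norm_scal : forall a x, ns_norm (ns_scal a x) = Rabs a * ns_norm x
}.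

Arguments ns_zero {n}.
Arguments ns_add {n}.
Arguments ns_opp {n}.
Arguments ns_scal {n}.
Arguments ns_norm {n}.

Definition complete (X : NormedSpace) : Prop :=
  forall u : nat -> X,
    (forall eps, 0 < eps -> exists N, forall m n, (N <= m)%nat -> (N <= n)%nat ->
        ns_norm (ns_add (u m) (ns_opp (u n))) < eps) ->
    exists l : X, forall eps, 0 < eps -> exists N, forall n, (N <= n)%nat ->
        ns_norm (ns_add (u n) (ns_opp l)) < eps.

Definition subspace (X : NormedSpace) (V : X -> Prop) : Prop :=
  V ns_zero /\
  (forall u v, V u -> V v -> V (ns_add u v)) /\
  (forall a v, V v -> V (ns_scal a v)).

(* f is a linear functional on the subspace V (only values on V matter). *)
Definition linear_on (X : NormedSpace) (V : X -> Prop) (f : X -> R) : Prop :=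
  (forall u v, V u -> V v -> f (ns_add u v) = f u + f v) /\
  (forall a v, V v -> f (ns_scal a v) = a * f v).

Definition bounded_on (X : NormedSpace) (V : X -> Prop) (f : X -> R) : Prop :=
  exists M, forall v, V v -> Rabs (f v) <= M * ns_norm v.

Definition dual_elt (X : NormedSpace) (V : X -> Prop) (f : X -> R) : Prop :=
  linear_on X V f /\ bounded_on X V f.

Definition dual_norm (X : NormedSpace) (V : X -> Prop) (f : X -> R) (c : R) : Prop :=
  is_lub (fun r => exists v, V v /\ ns_norm v <= 1 /\ r = Rabs (f v)) c.

Definition whole (X : NormedSpace) : X -> Prop := fun _ => True.

(* (1) => (2): condition (1) amounts to ||w + t x|| = |t| + ||w|| for w in V and
   real t, so a functional f on V of norm c extends to V + Rx by sending x to c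
   without increasing its norm, and Hahn-Banach (Zorn's lemma plus the same
   one-dimensional extension step) extends it further to X.
   (2) => (1): for v in V take a norming functional of v (norm 1, value ||v|| at v)
   and extend it by (2) to g with g x = 1; then ||v + x|| >= g (v + x) = ||v|| + 1,
   and the reverse inequality is the triangle inequality. *)

From Stdlib Require Import Reals Lra ClassicalEpsilon Classical.
From mathcomp Require classical_sets boolp.
Open Scope R_scope.

Lemma zorn_preorder (T : Type) (t0 : T) (R : T -> T -> Prop) :
  (forall t, R t t) -> (forall r s t, R r s -> R s t -> R r t) ->
  (forall A : T -> Prop, (forall s t, A s -> A t -> R s t \/ R t s) ->
     exists t, forall s, A s -> R s t) ->
  exists t, forall s, R t s -> R s t.
Proof.
intros Hrefl Htrans Hchain.
destruct (classical_sets.ZL_preorder t0 (R := fun a b => boolp.asbool (R a b)))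
  as [t Ht].
- intro a. apply boolp.asboolT. auto.
- intros a b c H1 H2. apply boolp.asboolT.
  apply boolp.asboolW in H1. apply boolp.asboolW in H2. eauto.
- intros A HA. destruct (Hchain A) as [t HAt].
  + intros s u Hs Hu.
    destruct (HA s u Hs Hu) as [H|H]; [left|right]; exact (boolp.asboolW H).
  + exists t. intros s Hs. apply boolp.asboolT. auto.
- exists t. intros s Hs. exact (boolp.asboolW (Ht s (boolp.asboolT Hs))).
Qed.

Notation "u ⊕ w" := (ns_add u w) (at level 50, left associativity).
Notation "a ⊙ u" := (ns_scal a u) (at level 40).
Notation nrm := ns_norm.

Section VectorSpace.
Context {X : NormedSpace}.

Lemma ns_add0l (x : X) : ns_zero ⊕ x = x.
Proof. rewrite ns_add_comm. apply ns_add_zero. Qed.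

Lemma ns_add_eq_self (a b : X) : a ⊕ b = a -> b = ns_zero.
Proof.
intro H. rewrite <- (ns_add_opp _ a). rewrite <- H at 1.
rewrite (ns_add_comm _ a b), <- ns_add_assoc, ns_add_opp, ns_add_zero.
reflexivity.
Qed.

Lemma ns_scal0l (x : X) : 0 ⊙ x = ns_zero.
Proof.
apply (ns_add_eq_self (0 ⊙ x)). rewrite <- ns_scal_distr_r. f_equal. ring.
Qed.

Lemma ns_scal0r (r : R) : r ⊙ (@ns_zero X) = ns_zero.
Proof.
apply (ns_add_eq_self (r ⊙ ns_zero)).
rewrite <- ns_scal_distr_l, ns_add_zero. reflexivity.
Qed.

Lemma ns_opp_uniq (x y : X) : x ⊕ y = ns_zero -> y = ns_opp x.
Proof.
intro H. rewrite <- (ns_add_zero _ y), <- (ns_add_opp _ x), ns_add_assoc,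
  (ns_add_comm _ y x), H, ns_add0l. reflexivity.
Qed.

Lemma ns_opp_scal (x : X) : ns_opp x = (-1) ⊙ x.
Proof.
symmetry. apply ns_opp_uniq. rewrite <- (ns_scal_one _ x) at 1.
rewrite <- ns_scal_distr_r. replace (1 + -1) with 0 by ring. apply ns_scal0l.
Qed.

Lemma ns_subrr (x : X) : x ⊕ (-1) ⊙ x = ns_zero.
Proof. rewrite <- ns_opp_scal. apply ns_add_opp. Qed.

Lemma ns_scalN1K (x : X) : (-1) ⊙ ((-1) ⊙ x) = x.
Proof. rewrite ns_scal_assoc. replace (-1 * -1) with 1 by ring. apply ns_scal_one. Qed.

Lemma ns_addACA (a b c d : X) : (a ⊕ b) ⊕ (c ⊕ d) = (a ⊕ c) ⊕ (b ⊕ d).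
Proof.
rewrite !ns_add_assoc. f_equal. rewrite <- !ns_add_assoc. f_equal.
apply ns_add_comm.
Qed.

Lemma ns_add_scal_factor (w y : X) (t : R) :
  t <> 0 -> w ⊕ t ⊙ y = t ⊙ ((/ t) ⊙ w ⊕ y).
Proof.
intro Ht. rewrite ns_scal_distr_l, ns_scal_assoc, Rinv_r, ns_scal_one by exact Ht.
reflexivity.
Qed.

Lemma ns_norm0 : nrm (@ns_zero X) = 0.
Proof. rewrite <- (ns_scal0l ns_zero), ns_norm_scal, Rabs_R0. ring. Qed.

Lemma ns_norm_scalN1 (x : X) : nrm ((-1) ⊙ x) = nrm x.
Proof.
rewrite ns_norm_scal. replace (Rabs (-1)) with 1; [ring|].
rewrite Rabs_left; lra.
Qed.

Lemma ns_norm_ge0 (x : X) : 0 <= nrm x.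
Proof.
pose proof (ns_norm_triangle _ x ((-1) ⊙ x)) as H.
rewrite ns_subrr, ns_norm0, ns_norm_scalN1 in H. lra.
Qed.

Lemma ns_decomp_uniq (W : X -> Prop) (y0 w1 w2 : X) (t1 t2 : R) :
  subspace X W -> ~ W y0 -> W w1 -> W w2 ->
  w1 ⊕ t1 ⊙ y0 = w2 ⊕ t2 ⊙ y0 -> w1 = w2 /\ t1 = t2.
Proof.
intros [_ [Hadd Hscal]] Hy H1 H2 E.
assert (E' : w1 ⊕ (-1) ⊙ w2 = (t2 + - t1) ⊙ y0).
{ apply (f_equal (fun z => z ⊕ ((-1) ⊙ w2 ⊕ (-t1) ⊙ y0))) in E.
  rewrite (ns_addACA w1), (ns_addACA w2), <- !ns_scal_distr_r, ns_subrr,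
    ns_add0l in E.
  replace (t1 + - t1) with 0 in E by ring.
  rewrite ns_scal0l, ns_add_zero in E. exact E. }
destruct (Req_dec t1 t2) as [Et|Nt].
- split; [|exact Et]. subst t2. replace (t1 + - t1) with 0 in E' by ring.
  rewrite ns_scal0l in E'. apply ns_opp_uniq in E'. rewrite ns_opp_scal in E'.
  rewrite <- (ns_scalN1K w2), E', ns_scalN1K. reflexivity.
- exfalso. apply Hy. assert (Hd : t2 + - t1 <> 0) by lra.
  apply (f_equal (fun z => (/ (t2 + - t1)) ⊙ z)) in E'.
  rewrite ns_scal_assoc, Rinv_l, ns_scal_one in E' by exact Hd.
  rewrite <- E'. apply Hscal, Hadd; [exact H1|]. apply Hscal. exact H2.
Qed.

End VectorSpace.

Section Functionals.
Context {X : NormedSpace}.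

Lemma subspace_whole : subspace X (whole X).
Proof. split; [exact I|split; intros; exact I]. Qed.

Lemma subspace_zero : subspace X (fun z => z = ns_zero).
Proof.
split; [reflexivity|split].
- intros u w -> ->. apply ns_add_zero.
- intros r w ->. apply ns_scal0r.
Qed.

Lemma linear_on0 (W : X -> Prop) (h : X -> R) :
  subspace X W -> linear_on X W h -> h ns_zero = 0.
Proof.
intros [H0 _] [_ Hscal]. rewrite <- (ns_scal0l ns_zero), Hscal by exact H0. ring.
Qed.

Lemma linear_on_whole_restrict (W : X -> Prop) (h : X -> R) :
  linear_on X (whole X) h -> linear_on X W h.
Proof.
intros [Hadd Hscal]. split; intros; [apply Hadd | apply Hscal]; exact I.
Qed.

Lemma linear_abs_le (g : X -> R) (c : R) :
  linear_on X (whole X) g -> (forall y, g y <= c * nrm y) ->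
  forall y, Rabs (g y) <= c * nrm y.
Proof.
intros [_ Hscal] Hb y. pose proof (Hb ((-1) ⊙ y)) as H.
rewrite Hscal, ns_norm_scalN1 in H by exact I.
pose proof (Hb y). unfold Rabs. destruct (Rcase_abs (g y)); lra.
Qed.

Lemma dual_norm_ge0 (W : X -> Prop) (f : X -> R) (c : R) :
  subspace X W -> linear_on X W f -> dual_norm X W f c -> 0 <= c.
Proof.
intros HW Hf [Hub _]. pose proof HW as [H0 _].
replace 0 with (Rabs (f ns_zero)) by (rewrite (linear_on0 W f HW Hf); apply Rabs_R0).
apply Hub. exists ns_zero. rewrite ns_norm0. repeat split; auto; lra.
Qed.

Lemma dual_norm_abs_le (W : X -> Prop) (f : X -> R) (c : R) :
  subspace X W -> linear_on X W f -> dual_norm X W f c ->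
  forall w, W w -> Rabs (f w) <= c * nrm w.
Proof.
intros HW Hf [Hub _] w Hw. pose proof HW as [_ [_ Hscal]]. pose proof Hf as [_ Lscal].
destruct (Req_dec (nrm w) 0) as [E|N].
- apply ns_norm_eq0 in E. subst w.
  rewrite (linear_on0 W f HW Hf), ns_norm0, Rabs_R0. lra.
- pose proof (ns_norm_ge0 w) as Nn.
  assert (Hinv : 0 < / nrm w) by (apply Rinv_0_lt_compat; lra).
  assert (Hu : Rabs (f ((/ nrm w) ⊙ w)) <= c).
  { apply Hub. exists ((/ nrm w) ⊙ w). repeat split; auto.
    rewrite ns_norm_scal, Rabs_pos_eq, Rinv_l by (auto; lra). lra. }
  rewrite Lscal, Rabs_mult, Rabs_pos_eq in Hu by (auto; lra).
  apply (Rmult_le_compat_l (nrm w)) in Hu; [|exact Nn].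
  rewrite <- Rmult_assoc, Rinv_r, Rmult_1_l in Hu by exact N. lra.
Qed.

Lemma dual_norm_attained (W : X -> Prop) (f : X -> R) (c : R) (w0 : X) :
  (forall w, W w -> Rabs (f w) <= c * nrm w) ->
  W w0 -> nrm w0 <= 1 -> Rabs (f w0) = c -> dual_norm X W f c.
Proof.
intros Hb Hw0 Hn0 Hf0. split.
- intros r [w [Hw [Hn ->]]]. pose proof (Hb w Hw).
  pose proof (Rabs_pos (f w0)). pose proof (ns_norm_ge0 w).
  assert (c * nrm w <= c * 1) by (apply Rmult_le_compat_l; lra). lra.
- intros b Hb'. apply Hb'. exists w0. auto.
Qed.

Lemma dual_norm_extension (W W' : X -> Prop) (f g : X -> R) (c : R) :
  subspace X W -> linear_on X W f -> dual_norm X W f c ->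
  (forall w, W w -> W' w /\ g w = f w) ->
  (forall y, W' y -> Rabs (g y) <= c * nrm y) -> dual_norm X W' g c.
Proof.
intros HW Hf Hdn Hext Hb. pose proof (dual_norm_ge0 W f c HW Hf Hdn) as Hc. split.
- intros r [y [Hy [Hn ->]]]. pose proof (Hb y Hy). pose proof (ns_norm_ge0 y).
  assert (c * nrm y <= c * 1) by (apply Rmult_le_compat_l; lra). lra.
- intros b Hub. apply (proj2 Hdn). intros r [w [Hw [Hn ->]]].
  destruct (Hext w Hw) as [Hw' <-]. apply Hub. exists w. auto.
Qed.

End Functionals.

Section OneStepExtension.
Context {X : NormedSpace} (W : X -> Prop) (h : X -> R) (y0 : X) (a : R).
Hypotheses (HW : subspace X W) (Hh : linear_on X W h) (Hy0 : ~ W y0).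

Definition add_line (z : X) : Prop := exists w t, W w /\ z = w ⊕ t ⊙ y0.

(* Sends w + t y0 to h w + t a; the decomposition is unique since y0 is not in W. *)
Definition line_ext (z : X) : R :=
  let p := epsilon (inhabits (ns_zero, 0))
             (fun p : X * R => W (fst p) /\ z = fst p ⊕ snd p ⊙ y0) in
  h (fst p) + snd p * a.

Lemma line_ext_eq (w : X) (t : R) : W w -> line_ext (w ⊕ t ⊙ y0) = h w + t * a.
Proof.
intro Hw. unfold line_ext.
assert (Hex : exists p : X * R, W (fst p) /\ w ⊕ t ⊙ y0 = fst p ⊕ snd p ⊙ y0)
  by (exists (w, t); auto).
destruct (epsilon_spec (inhabits (ns_zero, 0)) _ Hex) as [Hp Ep].
destruct (ns_decomp_uniq W y0 w _ t _ HW Hy0 Hw Hp Ep) as [<- <-].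
reflexivity.
Qed.

Lemma subspace_add_line : subspace X add_line.
Proof.
pose proof HW as [H0 [Hadd Hscal]]. split; [|split].
- exists ns_zero, 0. rewrite ns_scal0l, ns_add_zero. auto.
- intros u v [w1 [t1 [Hw1 ->]]] [w2 [t2 [Hw2 ->]]].
  exists (w1 ⊕ w2), (t1 + t2). rewrite ns_addACA, ns_scal_distr_r. auto.
- intros r v [w [t [Hw ->]]]. exists (r ⊙ w), (r * t).
  rewrite ns_scal_distr_l, ns_scal_assoc. auto.
Qed.

Lemma linear_on_line_ext : linear_on X add_line line_ext.
Proof.
pose proof HW as [_ [Hadd Hscal]]. pose proof Hh as [Ladd Lscal]. split.
- intros u v [w1 [t1 [Hw1 ->]]] [w2 [t2 [Hw2 ->]]].
  rewrite ns_addACA, <- ns_scal_distr_r, !line_ext_eq, Ladd by auto. ring.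
- intros r v [w [t [Hw ->]]].
  rewrite ns_scal_distr_l, ns_scal_assoc, !line_ext_eq, Lscal by auto. ring.
Qed.

Lemma line_ext_base (w : X) : W w -> add_line w /\ line_ext w = h w.
Proof.
intro Hw.
assert (E : w = w ⊕ 0 ⊙ y0) by (rewrite ns_scal0l, ns_add_zero; reflexivity).
split; [exists w, 0; auto|]. rewrite E at 1. rewrite line_ext_eq by exact Hw. ring.
Qed.

Lemma line_ext_y0 : add_line y0 /\ line_ext y0 = a.
Proof.
pose proof HW as [H0 _].
assert (E : y0 = ns_zero ⊕ 1 ⊙ y0) by (rewrite ns_scal_one, ns_add0l; reflexivity).
split; [exists ns_zero, 1; auto|]. rewrite E at 1.
rewrite line_ext_eq, (linear_on0 W h HW Hh) by exact H0. ring.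
Qed.

Lemma line_ext_le (c : R) :
  (forall w t, W w -> h w + t * a <= c * nrm (w ⊕ t ⊙ y0)) ->
  forall z, add_line z -> line_ext z <= c * nrm z.
Proof. intros Hb z [w [t [Hw ->]]]. rewrite line_ext_eq by exact Hw. auto. Qed.

End OneStepExtension.

Section HahnBanach.
Context {X : NormedSpace}.

Lemma dominated_sub_le_add (W : X -> Prop) (h : X -> R) (c : R) (y0 w1 w2 : X) :
  0 <= c -> subspace X W -> linear_on X W h ->
  (forall w, W w -> h w <= c * nrm w) -> W w1 -> W w2 ->
  h w1 - c * nrm (w1 ⊕ (-1) ⊙ y0) <= c * nrm (w2 ⊕ y0) - h w2.
Proof.
intros Hc [_ [Hadd _]] [Ladd _] Hb H1 H2.
pose proof (Hb _ (Hadd _ _ H1 H2)) as B. rewrite Ladd in B by assumption.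
assert (E : w1 ⊕ w2 = (w1 ⊕ (-1) ⊙ y0) ⊕ (w2 ⊕ y0)).
{ rewrite ns_addACA, (ns_add_comm _ ((-1) ⊙ y0)), ns_subrr, ns_add_zero.
  reflexivity. }
pose proof (ns_norm_triangle _ (w1 ⊕ (-1) ⊙ y0) (w2 ⊕ y0)) as T. rewrite <- E in T.
apply (Rmult_le_compat_l c) in T; lra.
Qed.

(* Take for [a] the supremum of the left-hand sides of [dominated_sub_le_add];
   rescaling [w] by [/ t] reduces the claim to [t = 1] and [t = -1]. *)
Lemma dominated_line_value (W : X -> Prop) (h : X -> R) (c : R) (y0 : X) :
  0 <= c -> subspace X W -> linear_on X W h -> (forall w, W w -> h w <= c * nrm w) ->
  exists a, forall w t, W w -> h w + t * a <= c * nrm (w ⊕ t ⊙ y0).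
Proof.
intros Hc HW Hh Hb. pose proof HW as [H0 [_ Hscal]]. pose proof Hh as [_ Lscal].
set (S := fun r => exists w, W w /\ r = h w - c * nrm (w ⊕ (-1) ⊙ y0)).
assert (HSb : bound S).
{ exists (c * nrm (ns_zero ⊕ y0) - h ns_zero). intros r [w [Hw ->]].
  apply (dominated_sub_le_add W); auto. }
destruct (completeness S HSb (ex_intro _ _ (ex_intro _ ns_zero (conj H0 eq_refl))))
  as [a [Hub Hlub]].
assert (Hle : forall w, W w -> a <= c * nrm (w ⊕ y0) - h w).
{ intros w Hw. apply Hlub. intros r [w1 [Hw1 ->]].
  apply (dominated_sub_le_add W); auto. }
assert (Hge : forall w, W w -> h w - c * nrm (w ⊕ (-1) ⊙ y0) <= a).
{ intros w Hw. apply Hub. exists w. auto. }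
exists a. intros w t Hw. destruct (Req_dec t 0) as [->|Nt].
{ rewrite ns_scal0l, ns_add_zero. specialize (Hb w Hw). lra. }
set (w' := (/ t) ⊙ w). assert (Hw' : W w') by (apply Hscal; exact Hw).
assert (Eh : h w = t * h w') by (unfold w'; rewrite Lscal by exact Hw; field; exact Nt).
rewrite (ns_add_scal_factor _ _ _ Nt), ns_norm_scal, Eh. fold w'.
destruct (Rlt_or_le 0 t) as [Tp|Tn].
- rewrite Rabs_pos_eq by lra. specialize (Hle w' Hw').
  apply (Rmult_le_compat_l t) in Hle; nra.
- rewrite Rabs_left by lra. specialize (Hge ((-1) ⊙ w') (Hscal _ _ Hw')).
  rewrite Lscal, <- ns_scal_distr_l, ns_norm_scalN1 in Hge by exact Hw'.
  apply (Rmult_le_compat_neg_l t) in Hge; nra.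
Qed.

End HahnBanach.

Record dominated_ext {X : NormedSpace} (W0 : X -> Prop) (f0 : X -> R) (c : R) :=
  DominatedExt {
    de_dom : X -> Prop;
    de_fun : X -> R;
    de_sub : subspace X de_dom;
    de_lin : linear_on X de_dom de_fun;
    de_base : forall w, W0 w -> de_dom w /\ de_fun w = f0 w;
    de_le : forall z, de_dom z -> de_fun z <= c * nrm z }.
Arguments de_dom {X W0 f0 c}.
Arguments de_fun {X W0 f0 c}.
Arguments de_sub {X W0 f0 c}.
Arguments de_lin {X W0 f0 c}.
Arguments de_base {X W0 f0 c}.
Arguments de_le {X W0 f0 c}.
Arguments DominatedExt {X W0 f0 c}.

Definition de_extends {X : NormedSpace} {W0 : X -> Prop} {f0 : X -> R} {c : R}
  (s t : dominated_ext W0 f0 c) : Prop :=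
  forall y, de_dom s y -> de_dom t y /\ de_fun t y = de_fun s y.

Section ChainUnion.
Context {X : NormedSpace} {W0 : X -> Prop} {f0 : X -> R} {c : R}.
Variables (A : dominated_ext W0 f0 c -> Prop) (t1 : dominated_ext W0 f0 c).
Hypotheses (HA1 : A t1)
  (Hchain : forall s t, A s -> A t -> de_extends s t \/ de_extends t s).

Definition chain_dom (y : X) : Prop := exists t, A t /\ de_dom t y.

Definition chain_fun (y : X) : R :=
  de_fun (epsilon (inhabits t1) (fun t => A t /\ de_dom t y)) y.

Lemma chain_fun_eq (t : dominated_ext W0 f0 c) (y : X) :
  A t -> de_dom t y -> chain_fun y = de_fun t y.
Proof.
intros HA Hy. unfold chain_fun.
assert (Hex : exists t, A t /\ de_dom t y) by eauto.
destruct (epsilon_spec (inhabits t1) _ Hex) as [HAe Hye].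
destruct (Hchain t _ HA HAe) as [Rt|Rt].
- apply (Rt y Hy).
- symmetry. apply (Rt y Hye).
Qed.

Lemma chain_dom2 (y1 y2 : X) :
  chain_dom y1 -> chain_dom y2 -> exists t, A t /\ de_dom t y1 /\ de_dom t y2.
Proof.
intros [s1 [HA1' Hy1]] [s2 [HA2 Hy2]].
destruct (Hchain s1 s2 HA1' HA2) as [Rt|Rt].
- exists s2. split; [auto|]. split; [apply (Rt y1 Hy1)|auto].
- exists s1. split; [auto|]. split; [auto|apply (Rt y2 Hy2)].
Qed.

Lemma subspace_chain_dom : subspace X chain_dom.
Proof.
split; [|split].
- exists t1. split; [auto|]. apply (de_sub t1).
- intros u v Hu Hv. destruct (chain_dom2 u v Hu Hv) as [s [HA [H1 H2]]].
  exists s. split; [auto|]. apply (de_sub s); auto.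
- intros r v [s [HA Hv]]. exists s. split; [auto|]. apply (de_sub s); auto.
Qed.

Lemma linear_on_chain_fun : linear_on X chain_dom chain_fun.
Proof.
split.
- intros u v Hu Hv. destruct (chain_dom2 u v Hu Hv) as [s [HA [H1 H2]]].
  assert (Huv : de_dom s (u ⊕ v)) by (apply (de_sub s); auto).
  rewrite !(chain_fun_eq s) by auto. apply (de_lin s); auto.
- intros r v [s [HA Hv]].
  assert (Hrv : de_dom s (r ⊙ v)) by (apply (de_sub s); auto).
  rewrite !(chain_fun_eq s) by auto. apply (de_lin s); auto.
Qed.

Lemma chain_upper_bound : exists u, forall s, A s -> de_extends s u.
Proof.
assert (Hbase : forall w, W0 w -> chain_dom w /\ chain_fun w = f0 w).
{ intros w Hw. destruct (de_base t1 w Hw) as [H1 H2].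
  split; [exists t1; auto|]. rewrite (chain_fun_eq t1) by auto. exact H2. }
assert (Hle : forall z, chain_dom z -> chain_fun z <= c * nrm z).
{ intros z [s [HA Hz]]. rewrite (chain_fun_eq s) by auto. apply (de_le s), Hz. }
exists (DominatedExt chain_dom chain_fun subspace_chain_dom linear_on_chain_fun
          Hbase Hle).
intros s HA y Hy. split; [exists s; auto | apply chain_fun_eq; auto].
Qed.

End ChainUnion.

Lemma maximal_dominated_ext_total {X : NormedSpace} {W0 : X -> Prop} {f0 : X -> R}
  {c : R} (t : dominated_ext W0 f0 c) :
  0 <= c -> (forall s, de_extends t s -> de_extends s t) -> forall y, de_dom t y.
Proof.
intros Hc Hmax y. apply NNPP. intro Hny.
destruct (dominated_line_value (de_dom t) (de_fun t) c y Hc (de_sub t) (de_lin t)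
  (de_le t)) as [a Ha].
pose proof (line_ext_base _ (de_fun t) y a (de_sub t) Hny) as Hbase.
assert (Hbase0 : forall w, W0 w ->
    add_line (de_dom t) y w /\ line_ext (de_dom t) (de_fun t) y a w = f0 w).
{ intros w Hw. destruct (de_base t w Hw) as [H1 H2].
  destruct (Hbase w H1) as [H3 H4]. split; congruence. }
set (s := DominatedExt _ _ (subspace_add_line _ y (de_sub t))
            (linear_on_line_ext _ _ y a (de_sub t) (de_lin t) Hny) Hbase0
            (line_ext_le _ _ y a (de_sub t) Hny c Ha)).
assert (Hts : de_extends t s) by (intros z Hz; apply Hbase, Hz).
apply Hny, (Hmax s Hts y), (line_ext_y0 _ _ y a (de_sub t) (de_lin t) Hny).
Qed.

Theorem hahn_banach {X : NormedSpace} (W0 : X -> Prop) (f0 : X -> R) (c : R) :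
  0 <= c -> subspace X W0 -> linear_on X W0 f0 ->
  (forall w, W0 w -> f0 w <= c * nrm w) ->
  exists g, linear_on X (whole X) g /\ (forall w, W0 w -> g w = f0 w) /\
            (forall y, g y <= c * nrm y).
Proof.
intros Hc HW0 Hl0 Hb0.
set (t0 := DominatedExt W0 f0 HW0 Hl0 (fun w Hw => conj Hw eq_refl) Hb0).
destruct (zorn_preorder _ t0 de_extends) as [t Ht].
- intros s y Hy. auto.
- intros r s u H1 H2 y Hy. destruct (H1 y Hy) as [A1 B1].
  destruct (H2 y A1) as [A2 B2]. split; [auto|congruence].
- intros A Hchain. destruct (classic (exists t, A t)) as [[t1 Ht1]|Hne].
  + exact (chain_upper_bound A t1 Ht1 Hchain).
  + exists t0. intros s Hs. exfalso. eauto.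
- pose proof (maximal_dominated_ext_total t Hc Ht) as Hall.
  exists (de_fun t). split; [|split].
  + destruct (de_lin t) as [Hadd Hscal]. split; intros; auto.
  + intros w Hw. apply (de_base t w Hw).
  + intros y. apply (de_le t), Hall.
Qed.

Lemma norming_functional {X : NormedSpace} (v : X) :
  exists g, linear_on X (whole X) g /\ (forall y, Rabs (g y) <= nrm y) /\
            g v = nrm v.
Proof.
destruct (classic (v = ns_zero)) as [->|Nv].
{ exists (fun _ => 0). rewrite ns_norm0. repeat split; intros; try ring.
  rewrite Rabs_R0. apply ns_norm_ge0. }
set (Z := fun z : X => z = ns_zero).
assert (Hle : forall w t, Z w -> 0 + t * nrm v <= 1 * nrm (w ⊕ t ⊙ v)).
{ intros w t ->. rewrite ns_add0l, ns_norm_scal.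
  pose proof (Rmult_le_compat_r _ _ _ (ns_norm_ge0 v) (Rle_abs t)). lra. }
pose proof (subspace_zero : subspace X Z) as HZ.
assert (HZl : linear_on X Z (fun _ => 0)) by (split; intros; ring).
destruct (line_ext_y0 Z (fun _ => 0) v (nrm v) HZ HZl Nv) as [Hv Hhv].
destruct (hahn_banach (add_line Z v) (line_ext Z (fun _ => 0) v (nrm v)) 1
  ltac:(lra) (subspace_add_line Z v HZ) (linear_on_line_ext _ _ v _ HZ HZl Nv)
  (line_ext_le _ _ v _ HZ Nv 1 Hle)) as [g [Hgl [Hgext Hgb]]].
exists g. split; [exact Hgl|split].
- intros y. rewrite <- (Rmult_1_l (nrm y)). apply linear_abs_le; assumption.
- rewrite Hgext by exact Hv. exact Hhv.
Qed.

Section NormAdditive.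
Context {X : NormedSpace} (V : X -> Prop) (x : X).
Hypothesis HV : subspace X V.

Lemma norm_add_scal_of_norm_add :
  (forall v, V v -> nrm (v ⊕ x) = 1 + nrm v) ->
  forall w t, V w -> nrm (w ⊕ t ⊙ x) = Rabs t + nrm w.
Proof.
intros H1 w t Hw. pose proof HV as [_ [_ Hscal]].
destruct (Req_dec t 0) as [->|Nt].
- rewrite ns_scal0l, ns_add_zero, Rabs_R0. ring.
- rewrite ns_add_scal_factor, ns_norm_scal, H1, ns_norm_scal, Rabs_inv
    by auto.
  field. apply Rabs_no_R0, Nt.
Qed.

Lemma dual_extension_of_norm_add :
  (forall v, V v -> nrm (v ⊕ x) = 1 + nrm v) ->
  forall (f : X -> R) (c : R), dual_elt X V f -> dual_norm X V f c ->
    exists g : X -> R,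
      dual_elt X (whole X) g /\ (forall v, V v -> g v = f v) /\
      dual_norm X (whole X) g c /\ g x = c.
Proof.
intros H1 f c [Hf _] Hdn. pose proof HV as [_ [_ Hscal]].
pose proof (dual_norm_ge0 V f c HV Hf Hdn) as Hc.
pose proof (dual_norm_abs_le V f c HV Hf Hdn) as Hfb.
pose proof (norm_add_scal_of_norm_add H1) as Hnorm.
assert (Hnx : ~ V x).
{ intro Hvx. specialize (H1 _ (Hscal (-1) _ Hvx)).
  rewrite ns_add_comm, ns_subrr, ns_norm0, ns_norm_scalN1 in H1.
  pose proof (ns_norm_ge0 x). lra. }
assert (Hle : forall w t, V w -> f w + t * c <= c * nrm (w ⊕ t ⊙ x)).
{ intros w t Hw. rewrite Hnorm by exact Hw.
  pose proof (Hfb w Hw). pose proof (Rle_abs (f w)).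
  pose proof (Rmult_le_compat_r c _ _ Hc (Rle_abs t)). lra. }
destruct (hahn_banach (add_line V x) (line_ext V f x c) c Hc
  (subspace_add_line V x HV) (linear_on_line_ext _ _ x _ HV Hf Hnx)
  (line_ext_le _ _ x _ HV Hnx c Hle)) as [g [Hgl [Hgext Hgb]]].
pose proof (linear_abs_le g c Hgl Hgb) as Hgabs.
assert (Hext : forall v, V v -> whole X v /\ g v = f v).
{ intros v Hv. destruct (line_ext_base V f x c HV Hnx v Hv) as [Hv' <-].
  split; [exact I | apply Hgext, Hv']. }
exists g. split; [|split; [|split]].
- split; [exact Hgl|]. exists c. intros v _. apply Hgabs.
- intros v Hv. apply Hext, Hv.
- apply (dual_norm_extension V (whole X) f g c); auto.
- destruct (line_ext_y0 V f x c HV Hf Hnx) as [Hx' <-]. apply Hgext, Hx'.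
Qed.

Lemma norm_add_of_dual_extension :
  nrm x = 1 ->
  (forall (f : X -> R) (c : R), dual_elt X V f -> dual_norm X V f c ->
    exists g : X -> R,
      dual_elt X (whole X) g /\ (forall v, V v -> g v = f v) /\
      dual_norm X (whole X) g c /\ g x = c) ->
  forall v, V v -> nrm (v ⊕ x) = 1 + nrm v.
Proof.
intros Hx H2 v Hv. pose proof HV as [_ [_ Hscal]].
apply Rle_antisym; [pose proof (ns_norm_triangle _ v x); lra|].
destruct (Req_dec (nrm v) 0) as [E|N].
{ rewrite E. apply ns_norm_eq0 in E. subst v. rewrite ns_add0l. lra. }
pose proof (ns_norm_ge0 v) as Nn.
destruct (norming_functional v) as [g0 [Hg0 [Hg0b Hg0v]]].
assert (Hdn : dual_norm X V g0 1).
{ apply (dual_norm_attained V g0 1 ((/ nrm v) ⊙ v)); auto.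
  - intros w _. rewrite Rmult_1_l. apply Hg0b.
  - rewrite ns_norm_scal, Rabs_pos_eq, Rinv_l by (auto; left; apply Rinv_0_lt_compat; lra).
    lra.
  - rewrite (proj2 Hg0) by exact I.
    rewrite Hg0v, Rinv_l, Rabs_R1 by exact N. reflexivity. }
assert (Hde : dual_elt X V g0).
{ split; [apply linear_on_whole_restrict, Hg0|].
  exists 1. intros w _. rewrite Rmult_1_l. apply Hg0b. }
destruct (H2 g0 1 Hde Hdn) as [g [[Hg _] [Hgext [Hgdn Hgx]]]].
pose proof (dual_norm_abs_le (whole X) g 1 subspace_whole Hg Hgdn (v ⊕ x) I) as Hb.
rewrite (proj1 Hg), Hgext, Hg0v, Hgx in Hb by (exact I || exact Hv).
pose proof (Rle_abs (nrm v + 1)). lra.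
Qed.

End NormAdditive.

Theorem mainTheorem1 (X : NormedSpace) (HX : complete X) (V : X -> Prop)
  (HV : subspace X V) (x : X) (Hx : ns_norm x = 1) :
  (forall v, V v -> ns_norm (ns_add v x) = 1 + ns_norm v) <->
  (forall (f : X -> R) (c : R), dual_elt X V f -> dual_norm X V f c ->
     exists g : X -> R,
       dual_elt X (whole X) g /\
       (forall v, V v -> g v = f v) /\
       dual_norm X (whole X) g c /\
       g x = c).
Proof.
split.
- exact (dual_extension_of_norm_add V x HV).
- intro H2. exact (norm_add_of_dual_extension V x HV Hx H2).
Qed.
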